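(* Let $f$ be a positive definite function and let $W=\{w_1,\dots,w_N\}\subset V$ be a norming set for $\mathcal{B}_M$. Then for every $x\in\mathcal{L}(G)$: (1) if $\hat{f}_k\le C_1k^{-s}$ for all $k$, with constants $C_1>0$ and $s>1$, then $$\max_{v\in V}|x(v)-\mathrm{I}_Wx(v)|\le\sqrt{\tfrac{C_1}{s-1}}\big(1+\|(\mathbf{S}_W\mathbf{B}_M)^{-1}\|\big)M^{-\frac{s-1}{2}}\|x\|_{K_f};$$ (2) if $\hat{f}_k\le C_2e^{-tk}$ for all $k$, with constants $C_2>0$ and $t>0$, then $$\max_{v\in V}|x(v)-\mathrm{I}_Wx(v)|\le\sqrt{\tfrac{C_2}{1-e^{-t}}}\big(1+\|(\mathbf{S}_W\mathbf{B}_M)^{-1}\|\big)e^{-\frac{t}{2}(M+1)}\|x\|_{K_f}.$$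
   Context: Let $G$ be a graph with vertex set $V=\{v_1,\dots,v_n\}$, symmetric non-negative weighted adjacency matrix $\mathbf{A}$, degree matrix $\mathbf{D}=\mathrm{diag}(\sum_k\mathbf{A}_{ik})$ (positive), and normalized Laplacian $\mathbf{L}=\mathbf{I}_n-\mathbf{D}^{-1/2}\mathbf{A}\mathbf{D}^{-1/2}$. Signals are vectors in $\mathcal{L}(G)\cong\mathbb{R}^n$ with euclidean norm and standard basis $e_1,\dots,e_n$. Fix an orthonormal eigendecomposition $\mathbf{L}=\mathbf{U}\,\mathrm{diag}(\lambda_1,\dots,\lambda_n)\mathbf{U}^\intercal$ with columns $u_1,\dots,u_n$. Fourier transform $\hat{x}=\mathbf{U}^\intercal x$; convolution operator $\mathbf{C}_x=\mathbf{U}\,\mathrm{diag}(\hat{x})\mathbf{U}^\intercal$. For $f\in\mathcal{L}(G)$ let $(\mathbf{K}_f)_{ij}=(\mathbf{C}_{e_j}f)(v_i)$; $f$ is a positive definite function if $\mathbf{K}_f$ is symmetric strictly positive definite; then $\|x\|_{K_f}=\sqrt{x^\intercal\mathbf{K}_f^{-1}x}$. For distinct nodes $w_k=v_{j_k}$, let $(\mathbf{K}_{f,W})_{kl}=(\mathbf{C}_{e_{j_l}}f)(w_k)$; the GBF interpolant is $\mathrm{I}_Wx=\sum_{k=1}^Nc_k\mathbf{C}_{e_{j_k}}f$ with $\mathbf{K}_{f,W}c=(x(w_1),\dots,x(w_N))^\intercal$. Let $\mathcal{B}_M=\mathrm{span}\{u_1,\dots,u_M\}$, $\mathbf{S}_Wx(v)=x(v)$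 for $v\in W$ and $0$ otherwise, $\mathbf{B}_Mx=\sum_{k=1}^M(u_k^\intercal x)u_k$. $W$ is a norming set for $\mathcal{B}_M$ if $\mathbf{S}_W\mathbf{B}_M$ is injective on $\mathcal{B}_M$; $\|(\mathbf{S}_W\mathbf{B}_M)^{-1}\|$ is the euclidean operator norm of the inverse of $\mathbf{S}_W\mathbf{B}_M|_{\mathcal{B}_M}$ on its image $\mathbf{S}_W(\mathcal{B}_M)$. *)

From HB Require Import structures.
From mathcomp Require Import all_boot all_order all_algebra.
From mathcomp Require Import classical_sets reals sequences exp.
Set Implicit Arguments. Unset Strict Implicit. Unset Printing Implicit Defensive.
Import Order.TTheory GRing.Theory Num.Theory.
Local Open Scope ring_scope.
Local Open Scope classical_set_scope.

Section GBF.
Variables (R : realType) (n : nat).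

(* signals are column vectors 'cV[R]_n; node v_i is index i : 'I_n *)

Definition enorm (x : 'cV[R]_n) : R := Num.sqrt (\sum_(i < n) x i 0 ^+ 2).

Definition ebasis (j : 'I_n) : 'cV[R]_n := \col_i (i == j)%:R.

Definition degree (A : 'M[R]_n) (i : 'I_n) : R := \sum_(k < n) A i k.
Definition Dinvsqrt (A : 'M[R]_n) : 'M[R]_n :=
  diag_mx (\row_i (Num.sqrt (degree A i))^-1).
Definition normLap (A : 'M[R]_n) : 'M[R]_n :=
  1%:M - Dinvsqrt A *m A *m Dinvsqrt A.

Definition gft (U : 'M[R]_n) (x : 'cV[R]_n) : 'cV[R]_n := U^T *m x.
Definition convop (U : 'M[R]_n) (x : 'cV[R]_n) : 'M[R]_n :=
  U *m diag_mx (gft U x)^T *m U^T.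

Definition Kf (U : 'M[R]_n) (f : 'cV[R]_n) : 'M[R]_n :=
  \matrix_(i, j) (convop U (ebasis j) *m f) i 0.

Definition pos_def_fun (U : 'M[R]_n) (f : 'cV[R]_n) : Prop :=
  (Kf U f)^T = Kf U f /\
  forall x : 'cV[R]_n, x != 0 -> 0 < (x^T *m Kf U f *m x) 0 0.

Definition Kfnorm (U : 'M[R]_n) (f : 'cV[R]_n) (x : 'cV[R]_n) : R :=
  Num.sqrt ((x^T *m invmx (Kf U f) *m x) 0 0).

(* W = {w_1,...,w_N}, w_k = v_{j k}, with j injective (distinct nodes) *)
Variable N : nat.

Definition KfW (U : 'M[R]_n) (f : 'cV[R]_n) (j : 'I_N -> 'I_n) : 'M[R]_N :=
  \matrix_(k, l) (convop U (ebasis (j l)) *m f) (j k) 0.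

Definition interp (U : 'M[R]_n) (f : 'cV[R]_n) (j : 'I_N -> 'I_n)
    (x : 'cV[R]_n) : 'cV[R]_n :=
  let c := invmx (KfW U f j) *m (\col_k x (j k) 0) in
  \sum_(k < N) c k 0 *: (convop U (ebasis (j k)) *m f).

Definition SW (j : 'I_N -> 'I_n) (x : 'cV[R]_n) : 'cV[R]_n :=
  \col_i (if [exists k, j k == i] then x i 0 else 0).

(* B_M (projection) with u_k = col k U  (k is 0-indexed: u_{k+1} = col k U) *)
Definition BM (U : 'M[R]_n) (M : nat) (x : 'cV[R]_n) : 'cV[R]_n :=
  \sum_(k < n | (k < M)%N) ((col k U)^T *m x) 0 0 *: col k U.

Definition inBM (U : 'M[R]_n) (M : nat) (y : 'cV[R]_n) : Prop :=
  exists a : 'I_n -> R, y = \sum_(k < n | (k < M)%N) a k *: col k U.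

Definition norming (U : 'M[R]_n) (M : nat) (j : 'I_N -> 'I_n) : Prop :=
  forall y1 y2, inBM U M y1 -> inBM U M y2 ->
    SW j (BM U M y1) = SW j (BM U M y2) -> y1 = y2.

(* ||(S_W B_M)^{-1}||: operator norm of the inverse of S_W B_M|_{B_M} on its
   image, i.e. sup { ||T^{-1} z|| : z in S_W(B_M), ||z|| <= 1 }, written with
   y = T^{-1} z ranging over B_M *)
Definition inv_opnorm (U : 'M[R]_n) (M : nat) (j : 'I_N -> 'I_n) : R :=
  sup [set enorm y | y in [set y | inBM U M y /\ enorm (SW j (BM U M y)) <= 1]].

(* max_{v in V} |x(v)| (values nonnegative, so 0 is a neutral seed) *)
Definition maxabs (x : 'cV[R]_n) : R := \big[Num.max/0]_(v < n) `|x v 0|.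

End GBF.

From HB Require Import structures.
From mathcomp Require Import all_boot all_order all_algebra.
From mathcomp Require Import classical_sets reals sequences exp.
From mathcomp Require Import ring lra.
Import Order.TTheory GRing.Theory Num.Theory.
Local Open Scope ring_scope.
Set Implicit Arguments. Unset Strict Implicit. Unset Printing Implicit Defensive.

(* The interpolant I_W x is the K_f^-1-orthogonal projection of x onto the
   span of the columns of K_f at the nodes of W, so the error e = x - I_W x
   vanishes on W and ||e||_K_f <= ||x||_K_f.  Hence e(v) = <K_f g, e>_K_f^-1
   for every g = e_v - sum_k a_k e_(w_k), and Cauchy-Schwarz gives
   |e(v)|^2 <= (sum_k ghat_k^2 fhat_k) ||x||_K_f^2 with ghat = U^T g.
   We choose a so that ghat vanishes on the first M frequencies: a is the
   restriction to W of some y in B_M with ||a||^2 = y(v) <= ||y||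
   <= ||(S_W B_M)^-1|| ||a||, so every |ghat_k| <= 1 + ||(S_W B_M)^-1|| and
   |e(v)| <= (1 + ||(S_W B_M)^-1||) (sum_(k > M) fhat_k)^(1/2) ||x||_K_f.
   The decay hypotheses bound this tail by telescoping. *)

Section RealField.
Variable R : realFieldType.

Lemma discr_le_of_quadratic_ge0 (p q r : R) : 0 <= r ->
  (forall t, 0 <= p + 2 * t * q + t ^+ 2 * r) -> q ^+ 2 <= p * r.
Proof.
move=> r_ge0 quad_ge0; have [r_gt0|] := ltrP 0 r.
  rewrite -subr_ge0.
  have -> : p * r - q ^+ 2 = r * (p + 2 * (- q / r) * q + (- q / r) ^+ 2 * r)
    by field; rewrite gt_eqF.
  by apply: mulr_ge0; [exact: ltW|exact: quad_ge0].
move=> r_le0; have r0 : r = 0 by apply/eqP; rewrite eq_le r_le0 r_ge0.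
have [->|q_neq0] := eqVneq q 0; first by rewrite r0 expr0n mulr0.
have := quad_ge0 (- (p + 1) / (2 * q)); rewrite r0.
have -> : p + 2 * (- (p + 1) / (2 * q)) * q + (- (p + 1) / (2 * q)) ^+ 2 * 0 = -1.
  by field; rewrite q_neq0.
by rewrite oppr_ge0 ler10.
Qed.

Lemma sum_mul_sqr_le m (p q : 'I_m -> R) :
  (\sum_i p i * q i) ^+ 2 <= (\sum_i p i ^+ 2) * (\sum_i q i ^+ 2).
Proof.
apply: discr_le_of_quadratic_ge0 => [|t]; first by rewrite sumr_ge0 // => i _; rewrite sqr_ge0.
have -> : \sum_i p i ^+ 2 + 2 * t * (\sum_i p i * q i) + t ^+ 2 * \sum_i q i ^+ 2 =
    \sum_i (p i + t * q i) ^+ 2.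
  by rewrite !mulr_sumr -!big_split /=; apply: eq_bigr => i _; ring.
by rewrite sumr_ge0 // => i _; rewrite sqr_ge0.
Qed.

Lemma sqr_le_sum m (F : 'I_m -> R) k : F k ^+ 2 <= \sum_i F i ^+ 2.
Proof. by rewrite (bigD1 k) //= lerDl sumr_ge0 // => i _; rewrite sqr_ge0. Qed.

Lemma norm_le_of_sqr_le (x c : R) : 0 <= c -> x ^+ 2 <= c ^+ 2 -> `|x| <= c.
Proof. by move=> c_ge0; rewrite -real_normK ?num_real // ler_sqr ?nnegrE. Qed.

Lemma sqr_le_of_norm_le (x c : R) : `|x| <= c -> x ^+ 2 <= c ^+ 2.
Proof.
move=> xc; rewrite -real_normK ?num_real // ler_sqr ?nnegrE //.
exact: le_trans xc.
Qed.

End RealField.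

Section BilinearForm.
Variables (R : realFieldType) (n : nat).
Implicit Types (Q : 'M[R]_n) (u w z : 'cV[R]_n).

Definition bform Q u w : R := (u^T *m Q *m w) 0 0.

Lemma bformDl Q u1 u2 w : bform Q (u1 + u2) w = bform Q u1 w + bform Q u2 w.
Proof. by rewrite /bform linearD /= !mulmxDl mxE. Qed.

Lemma bformDr Q u w1 w2 : bform Q u (w1 + w2) = bform Q u w1 + bform Q u w2.
Proof. by rewrite /bform !mulmxDr mxE. Qed.

Lemma bform_sym Q u w : Q^T = Q -> bform Q u w = bform Q w u.
Proof.
move=> Q_sym; rewrite /bform; transitivity ((w^T *m Q *m u)^T 0 0); last by rewrite mxE.
by rewrite !trmx_mul trmxK Q_sym mulmxA.
Qed.

Lemma bform_cauchy_schwarz Q u w : Q^T = Q -> (forall z, 0 <= bform Q z z) ->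
  bform Q u w ^+ 2 <= bform Q u u * bform Q w w.
Proof.
move=> Q_sym Q_psd; apply: discr_le_of_quadratic_ge0 => [|t]; first exact: Q_psd.
have := Q_psd (u + t *: w).
rewrite bformDl !bformDr (bform_sym (t *: w) u Q_sym) /bform.
rewrite [(t *: w)^T]linearZ /= -!scalemxAl -!scalemxAr !mxE.
by congr (0 <= _); ring.
Qed.

Lemma bform_pos_def_ge0 Q : (forall z, z != 0 -> 0 < bform Q z z) ->
  forall z, 0 <= bform Q z z.
Proof.
move=> Q_pd z; have [->|/Q_pd/ltW //] := eqVneq z 0.
by rewrite /bform mulmx0 mxE.
Qed.

Lemma unitmx_pos_def Q : (forall z, z != 0 -> 0 < bform Q z z) -> Q \in unitmx.
Proof.
move=> Q_pd; rewrite -row_free_unit; apply/inj_row_free => v vQ0.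
apply/trmx_inj/eqP; rewrite trmx0; apply: contraT => v_neq0.
by have := Q_pd _ v_neq0; rewrite /bform trmxK vQ0 mul0mx mxE ltxx.
Qed.

End BilinearForm.

Lemma bform_mulmx (R : realFieldType) n p (B : 'M[R]_(n, p)) (Q : 'M[R]_n)
    (c d : 'cV[R]_p) :
  bform Q (B *m c) (B *m d) = bform (B^T *m Q *m B) c d.
Proof. by rewrite /bform trmx_mul !mulmxA. Qed.

Section EuclideanNorm.
Variable R : realType.
Implicit Types (m : nat).

Lemma sum_sqr_col m (w : 'cV[R]_m) : \sum_i w i 0 ^+ 2 = (w^T *m w) 0 0.
Proof. by rewrite mxE; apply: eq_bigr => i _; rewrite mxE expr2. Qed.

Lemma enorm_ge0 m (w : 'cV[R]_m) : 0 <= enorm w.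
Proof. exact: sqrtr_ge0. Qed.

Lemma sqr_enorm m (w : 'cV[R]_m) : enorm w ^+ 2 = \sum_i w i 0 ^+ 2.
Proof. by rewrite sqr_sqrtr // sumr_ge0 // => i _; rewrite sqr_ge0. Qed.

Lemma enorm0 m : enorm (0 : 'cV[R]_m) = 0.
Proof. by rewrite /enorm big1 ?sqrtr0 // => i _; rewrite mxE expr0n. Qed.

Lemma enorm_eq0 m (w : 'cV[R]_m) : enorm w = 0 -> w = 0.
Proof.
move=> w0; have : \sum_i w i 0 ^+ 2 = 0 by rewrite -sqr_enorm w0 expr0n.
move/psumr_eq0P => sqr_w0; apply/matrixP => i l; rewrite (ord1 l) mxE.
by apply/eqP; rewrite -sqrf_eq0 sqr_w0 // => k _; rewrite sqr_ge0.
Qed.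

Lemma enormZ m (c : R) (w : 'cV[R]_m) : enorm (c *: w) = `|c| * enorm w.
Proof.
rewrite /enorm -sqrtr_sqr -sqrtrM ?sqr_ge0 // mulr_sumr.
by congr Num.sqrt; apply: eq_bigr => i _; rewrite mxE exprMn.
Qed.

Lemma norm_entry_le_enorm m (w : 'cV[R]_m) i : `|w i 0| <= enorm w.
Proof.
by apply: norm_le_of_sqr_le; rewrite ?enorm_ge0 // sqr_enorm (sqr_le_sum (fun i => w i 0)).
Qed.

Lemma enorm_orthmx m (U : 'M[R]_m) (z : 'cV[R]_m) :
  U^T *m U = 1%:M -> enorm (U *m z) = enorm z.
Proof.
by move=> U_orth; rewrite /enorm !sum_sqr_col trmx_mul -mulmxA (mulmxA U^T) U_orth mul1mx.
Qed.

Lemma enorm_mulmx_le p m (H : 'M[R]_(p, m)) (w : 'cV[R]_m) :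
  enorm (H *m w) <= Num.sqrt (\sum_k \sum_i H k i ^+ 2) * enorm w.
Proof.
have frob_ge0 : 0 <= \sum_k \sum_i H k i ^+ 2.
  by apply: sumr_ge0 => k _; apply: sumr_ge0 => i _; exact: sqr_ge0.
rewrite /enorm -sqrtrM // ler_sqrt; last first.
  by rewrite mulr_ge0 // sumr_ge0 // => i _; rewrite sqr_ge0.
rewrite mulr_suml; apply: ler_sum => k _; rewrite mxE.
exact: (sum_mul_sqr_le (fun i => H k i) (fun i => w i 0)).
Qed.

End EuclideanNorm.

Lemma mulmx_ebasis (R : realType) m n (B : 'M[R]_(m, n)) v : B *m ebasis R v = col v B.
Proof.
apply/matrixP => i l; rewrite mxE (bigD1 v) //= !mxE eqxx mulr1 big1 ?addr0 // => k k_neq.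
by rewrite mxE (negbTE k_neq) mulr0.
Qed.

Section KernelInterpolation.
Variables (R : realType) (n N : nat) (K : 'M[R]_n) (P : 'M[R]_(n, N)).
Hypotheses (K_sym : K^T = K) (K_pd : forall z, z != 0 -> 0 < bform K z z).
Hypothesis P_inj : forall c : 'cV[R]_N, P *m c = 0 -> c = 0.

Let K_unit : K \in unitmx. Proof. exact: unitmx_pos_def. Qed.

Lemma invK_sym : (invmx K)^T = invmx K.
Proof. by rewrite trmx_inv K_sym. Qed.

Lemma invK_psd z : 0 <= bform (invmx K) z z.
Proof.
have := bform_pos_def_ge0 (Q := K) K_pd (invmx K *m z).
by rewrite bform_mulmx invK_sym (mulVmx K_unit) mul1mx.
Qed.

Lemma gram_unit : P^T *m K *m P \in unitmx.
Proof.
apply: unitmx_pos_def => c c_neq0; rewrite -bform_mulmx; apply: K_pd.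
by apply: contra c_neq0 => /eqP/P_inj ->.
Qed.

Definition kinterp (x : 'cV[R]_n) : 'cV[R]_n :=
  K *m (P *m (invmx (P^T *m K *m P) *m (P^T *m x))).

Lemma kinterp_err_orth x : P^T *m (x - kinterp x) = 0.
Proof. by rewrite mulmxBr /kinterp !mulmxA mulmxV ?mul1mx ?subrr // gram_unit. Qed.

Lemma kinterp_err_native_le x :
  bform (invmx K) (x - kinterp x) (x - kinterp x) <= bform (invmx K) x x.
Proof.
set e := x - kinterp x.
set h := K *m (P *m (invmx (P^T *m K *m P) *m (P^T *m x))).
have x_eq : x = e + h by rewrite /e /h /kinterp subrK.
have e_orth : bform (invmx K) e h = 0.
  rewrite /bform /h !mulmxA -(mulmxA e^T) (mulVmx K_unit) mulmx1.
  by rewrite -[e^T *m P]trmxK trmx_mul trmxK kinterp_err_orth trmx0 !mul0mx mxE.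
clearbody e h; rewrite x_eq bformDl !bformDr e_orth (bform_sym _ e invK_sym) e_orth.
by rewrite addr0 add0r lerDl invK_psd.
Qed.

Lemma kinterp_err_sqr_le x v (a : 'cV[R]_N) :
  (x - kinterp x) v 0 ^+ 2 <=
  bform K (ebasis R v - P *m a) (ebasis R v - P *m a) * bform (invmx K) x x.
Proof.
set e := x - kinterp x; set g := ebasis R v - P *m a.
have e_v : e v 0 = bform (invmx K) (K *m g) e.
  rewrite /bform trmx_mul K_sym -(mulmxA _ K) (mulmxV K_unit) mulmx1.
  rewrite /g [(_ - P *m a)^T]linearB /= mulmxBl trmx_mul -mulmxA kinterp_err_orth mulmx0 subr0.
  by rewrite -[_ *m e]trmxK trmx_mul trmxK mulmx_ebasis !mxE.
have g_native : bform (invmx K) (K *m g) (K *m g) = bform K g g.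
  by rewrite bform_mulmx K_sym (mulmxV K_unit) mul1mx.
rewrite e_v; apply: le_trans (bform_cauchy_schwarz _ _ invK_sym invK_psd) _.
rewrite g_native ler_wpM2l ?kinterp_err_native_le //.
exact: bform_pos_def_ge0.
Qed.

End KernelInterpolation.

Section Selection.
Variables (R : realType) (n N : nat) (j : 'I_N -> 'I_n).
Hypothesis j_inj : injective j.

Definition sel_mx : 'M[R]_(n, N) := \matrix_(i, k) (i == j k)%:R.

Lemma mulmx_sel m (B : 'M[R]_(m, n)) i k : (B *m sel_mx) i k = B i (j k).
Proof.
rewrite mxE (bigD1 (j k)) //= mxE eqxx mulr1 big1 ?addr0 // => l l_neq.
by rewrite mxE (negbTE l_neq) mulr0.
Qed.

Lemma trsel_mulmx m (C : 'M[R]_(n, m)) k l : (sel_mx^T *m C) k l = C (j k) l.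
Proof.
rewrite mxE (bigD1 (j k)) //= !mxE eqxx mul1r big1 ?addr0 // => i i_neq.
by rewrite !mxE (negbTE i_neq) mul0r.
Qed.

Lemma sel_mulmx_at (c : 'cV[R]_N) k : (sel_mx *m c) (j k) 0 = c k 0.
Proof.
rewrite mxE (bigD1 k) //= mxE eqxx mul1r big1 ?addr0 // => l l_neq.
by rewrite mxE (inj_eq j_inj) eq_sym (negbTE l_neq) mul0r.
Qed.

Lemma sel_mulmx_inj (c : 'cV[R]_N) : sel_mx *m c = 0 -> c = 0.
Proof. by move=> c0; apply/matrixP => k l; rewrite (ord1 l) -sel_mulmx_at c0 !mxE. Qed.

Lemma sum_over_nodes (F : 'I_n -> R) :
  \sum_k F (j k) = \sum_(i in [set j k | k in [set: 'I_N]]) F i.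
Proof.
rewrite big_imset /= => [|k l _ _]; last exact: j_inj.
by apply: eq_bigl => k; rewrite inE.
Qed.

Lemma sum_over_nodes_le (F : 'I_n -> R) : (forall i, 0 <= F i) ->
  \sum_k F (j k) <= \sum_i F i.
Proof.
move=> F_ge0; rewrite sum_over_nodes [leRHS](bigID (mem [set j k | k in [set: 'I_N]])) /=.
by rewrite lerDl sumr_ge0.
Qed.

Lemma enorm_SW (w : 'cV[R]_n) : enorm (SW j w) = enorm (\col_k w (j k) 0).
Proof.
rewrite /enorm; congr Num.sqrt.
under [RHS]eq_bigr do rewrite mxE.
rewrite (sum_over_nodes (fun i => w i 0 ^+ 2)) [RHS]big_mkcond /=.
apply: eq_bigr => i _; rewrite mxE.
have -> : [exists k, j k == i] = (i \in [set j k | k in [set: 'I_N]]).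
  by apply/existsP/imsetP => [[k /eqP <-]|[k _ ->]]; exists k.
by case: ifP => _ //; rewrite expr0n.
Qed.

Lemma SW0 : SW j 0 = 0 :> 'cV[R]_n.
Proof. by apply/matrixP => i l; rewrite !mxE; case: ifP. Qed.

Lemma SWZ (c : R) (w : 'cV[R]_n) : SW j (c *: w) = c *: SW j w.
Proof. by apply/matrixP => i l; rewrite !mxE; case: ifP => _; rewrite ?mulr0. Qed.

End Selection.

Section GBFKernel.
Variables (R : realType) (n : nat) (U : 'M[R]_n) (f : 'cV[R]_n).
Hypothesis f_pd : pos_def_fun U f.

Lemma Kf_spectral : Kf U f = U *m diag_mx (gft U f)^T *m U^T.
Proof.
apply/matrixP => i k; rewrite mxE /convop /gft mulmx_ebasis -mulmxA !mul_mx_diag !mxE.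
by apply: eq_bigr => l _; rewrite !mxE mulrAC.
Qed.

Lemma bform_Kf g : bform (Kf U f) g g = \sum_k (U^T *m g) k 0 ^+ 2 * gft U f k 0.
Proof.
have -> : Kf U f = U^T^T *m diag_mx (gft U f)^T *m U^T by rewrite trmxK Kf_spectral.
rewrite -bform_mulmx /bform mul_mx_diag mxE; apply: eq_bigr => k _.
by rewrite !mxE expr2 mulrAC.
Qed.

Lemma Kf_sym : (Kf U f)^T = Kf U f. Proof. by case: f_pd. Qed.

Lemma Kf_pos_def z : z != 0 -> 0 < bform (Kf U f) z z.
Proof. by case: f_pd => _; apply. Qed.

Lemma gft_ge0 k : U^T *m U = 1%:M -> 0 <= gft U f k 0.
Proof.
move=> U_orth; have := bform_pos_def_ge0 Kf_pos_def (U *m ebasis R k).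
rewrite bform_Kf mulmxA U_orth mul1mx (bigD1 k) //= big1 ?addr0 => [|l l_neq].
  by rewrite mxE eqxx expr1n mul1r.
by rewrite mxE (negbTE l_neq) expr0n mul0r.
Qed.

Variables (N : nat) (j : 'I_N -> 'I_n).
Hypothesis j_inj : injective j.

Lemma KfW_sel : KfW U f j = (sel_mx R j)^T *m Kf U f *m sel_mx R j.
Proof. by apply/matrixP => k l; rewrite mulmx_sel trsel_mulmx !mxE. Qed.

Lemma interp_kinterp x : interp U f j x = kinterp (Kf U f) (sel_mx R j) x.
Proof.
rewrite /interp /kinterp -KfW_sel.
have -> : \col_k x (j k) 0 = (sel_mx R j)^T *m x.
  by apply/matrixP => k l; rewrite (ord1 l) trsel_mulmx mxE.
apply/matrixP => i l; rewrite (ord1 l) summxE mulmxA mxE.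
by apply: eq_bigr => k _; rewrite mxE mulmx_sel mulrC [Kf U f i (j k)]mxE.
Qed.

Lemma interp_err_sqr_le x v (a : 'cV[R]_N) :
  (x - interp U f j x) v 0 ^+ 2 <=
  (\sum_k (U^T *m (ebasis R v - sel_mx R j *m a)) k 0 ^+ 2 * gft U f k 0)
  * Kfnorm U f x ^+ 2.
Proof.
rewrite interp_kinterp -bform_Kf sqr_sqrtr ?(invK_psd Kf_sym Kf_pos_def) //.
exact: (kinterp_err_sqr_le Kf_sym Kf_pos_def (sel_mulmx_inj j_inj)).
Qed.

End GBFKernel.

Section NormingSet.
Variables (R : realType) (n : nat) (U : 'M[R]_n) (N : nat) (j : 'I_N -> 'I_n) (M : nat).
Hypotheses (U_orth : U^T *m U = 1%:M) (j_inj : injective j).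
Implicit Types (v k : 'I_n).

Local Notation L := (inv_opnorm U M j).

Definition bandlimited (z : 'cV[R]_n) := forall k : 'I_n, (M <= k)%N -> z k 0 = 0.

Lemma sum_low_cols (z : 'cV[R]_n) : bandlimited z ->
  \sum_(k < n | (k < M)%N) z k 0 *: col k U = U *m z.
Proof.
move=> z_bl; apply/matrixP => i l; rewrite (ord1 l) summxE mxE big_mkcond /=.
apply: eq_bigr => k _; rewrite !mxE; case: ltnP => k_M; first by rewrite mulrC.
by rewrite z_bl // mulr0.
Qed.

Lemma inBM_mulmx (z : 'cV[R]_n) : bandlimited z -> inBM U M (U *m z).
Proof. by move=> z_bl; exists (fun k => z k 0); rewrite sum_low_cols. Qed.

Lemma inBMP (y : 'cV[R]_n) : inBM U M y -> exists2 z, bandlimited z & y = U *m z.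
Proof.
case=> a ->; set z := \col_k (if (k < M)%N then a k else 0).
have z_bl : bandlimited z by move=> k k_M; rewrite mxE ltnNge k_M.
exists z => //; rewrite -sum_low_cols //.
by apply: eq_bigr => k k_M; rewrite mxE k_M.
Qed.

Lemma BM_mulmx (z : 'cV[R]_n) : bandlimited z -> BM U M (U *m z) = U *m z.
Proof.
move=> z_bl; rewrite /BM -[RHS](sum_low_cols z_bl); apply: eq_bigr => k _.
congr (_ *: _); transitivity ((U^T *m (U *m z)) k 0).
  by rewrite !mxE; apply: eq_bigr => i _; rewrite !mxE.
by rewrite mulmxA U_orth mul1mx.
Qed.

Lemma BM_id (y : 'cV[R]_n) : inBM U M y -> BM U M y = y.
Proof. by case/inBMP => z z_bl ->; apply: BM_mulmx. Qed.

Lemma inBM0 : inBM U M 0.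
Proof. by exists (fun _ => 0); rewrite big1 // => k _; rewrite scale0r. Qed.

Lemma inBMZ (c : R) (y : 'cV[R]_n) : inBM U M y -> inBM U M (c *: y).
Proof.
case=> a ->; exists (fun k => c * a k); rewrite scaler_sumr.
by apply: eq_bigr => k _; rewrite scalerA.
Qed.

(* On bandlimited vectors reg_gram acts as Phi^T Phi, the Gram matrix of
   S_W B_M in the coordinates of U; the mask on the high frequencies makes it
   invertible on the whole space. *)
Definition sampling_mx : 'M[R]_(N, n) :=
  \matrix_(i, k) (if (k < M)%N then U (j i) k else 0).
Definition highpass_mask : 'rV[R]_n := \row_k (if (k < M)%N then 0 else 1).
Definition reg_gram : 'M[R]_n :=
  sampling_mx^T *m sampling_mx + diag_mx highpass_mask.

Local Notation Phi := sampling_mx.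
Local Notation G := reg_gram.

Lemma sampling_mulmx (z : 'cV[R]_n) : bandlimited z ->
  Phi *m z = \col_i (U *m z) (j i) 0.
Proof.
move=> z_bl; apply/matrixP => i l; rewrite (ord1 l) !mxE; apply: eq_bigr => k _.
by rewrite mxE; case: ltnP => k_M //; rewrite z_bl // !mulr0.
Qed.

Lemma trsampling_mulmx (w : 'cV[R]_N) k :
  (Phi^T *m w) k 0 = if (k < M)%N then \sum_i U (j i) k * w i 0 else 0.
Proof.
rewrite mxE; case: ifP => k_M; first by apply: eq_bigr => i _; rewrite !mxE k_M.
by rewrite big1 // => i _; rewrite !mxE k_M mul0r.
Qed.

Lemma reg_gram_mulmx (z : 'cV[R]_n) k :
  (G *m z) k 0 = (Phi^T *m (Phi *m z)) k 0 + highpass_mask 0 k * z k 0.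
Proof. by rewrite /G mulmxDl mxE mulmxA mul_diag_mx !mxE. Qed.

Lemma reg_gram_bandlimited (z : 'cV[R]_n) : bandlimited z ->
  G *m z = Phi^T *m (Phi *m z).
Proof.
move=> z_bl; apply/matrixP => k l; rewrite (ord1 l) reg_gram_mulmx !mxE.
by case: ltnP => k_M; rewrite ?mul0r ?addr0 // z_bl // mulr0 addr0.
Qed.

Lemma bform_reg_gram (z : 'cV[R]_n) : bform G z z =
  enorm (Phi *m z) ^+ 2 + \sum_k highpass_mask 0 k * z k 0 ^+ 2.
Proof.
rewrite /bform /G mulmxDr mulmxDl mxE sqr_enorm sum_sqr_col trmx_mul !mulmxA.
congr (_ + _); rewrite mul_mx_diag mxE; apply: eq_bigr => k _.
by rewrite !mxE expr2 mulrAC mulrC.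
Qed.

Hypothesis W_norming : norming U M j.

Lemma reg_gram_pos_def (z : 'cV[R]_n) : z != 0 -> 0 < bform G z z.
Proof.
have mask_ge0 k : 0 <= highpass_mask 0 k * z k 0 ^+ 2.
  by rewrite mulr_ge0 ?sqr_ge0 // mxE; case: ifP.
have mask_sum_ge0 : 0 <= \sum_k highpass_mask 0 k * z k 0 ^+ 2 by exact: sumr_ge0.
move=> z_neq0; rewrite bform_reg_gram lt_def addr_ge0 ?sqr_ge0 // andbT.
apply: contra z_neq0; rewrite paddr_eq0 ?sqr_ge0 // sqrf_eq0.
case/andP => /eqP/enorm_eq0 Phiz0 /eqP mask0; apply/eqP.
have z_bl : bandlimited z.
  move=> k k_M; have /eqP := psumr_eq0P (fun k _ => mask_ge0 k) mask0 (i := k) isT.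
  by rewrite mxE ltnNge k_M mul1r sqrf_eq0 => /eqP.
have Uz0 : U *m z = 0.
  apply: W_norming; [exact: inBM_mulmx | exact: inBM0 |].
  rewrite BM_mulmx // BM_id; last exact: inBM0.
  apply/matrixP => i l; rewrite !mxE; case: existsP => // -[k /eqP <-].
  by have := congr1 (fun w : 'cV[R]_N => w k 0) (sampling_mulmx z_bl); rewrite Phiz0 !mxE.
by rewrite -[z]mul1mx -U_orth -mulmxA Uz0 mulmx0.
Qed.

Lemma reg_gram_unit : G \in unitmx.
Proof. exact: unitmx_pos_def reg_gram_pos_def. Qed.

Definition lowpass_delta (v : 'I_n) : 'cV[R]_n := \col_k (if (k < M)%N then U v k else 0).
Definition lowpass_coef (v : 'I_n) : 'cV[R]_n := invmx G *m lowpass_delta v.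

Lemma reg_gram_lowpass_coef v : G *m lowpass_coef v = lowpass_delta v.
Proof. by rewrite mulmxA mulmxV ?mul1mx // reg_gram_unit. Qed.

Lemma lowpass_coef_entry v k : (Phi^T *m (Phi *m lowpass_coef v)) k 0 +
  highpass_mask 0 k * lowpass_coef v k 0 = if (k < M)%N then U v k else 0.
Proof. by rewrite -reg_gram_mulmx reg_gram_lowpass_coef mxE. Qed.

Lemma lowpass_coef_bandlimited v : bandlimited (lowpass_coef v).
Proof.
move=> k k_M; have := lowpass_coef_entry v k.
by rewrite trsampling_mulmx mxE ltnNge k_M /= add0r mul1r.
Qed.

Lemma lowpass_coef_normal_eq v k : (k < M)%N ->
  \sum_i U (j i) k * (Phi *m lowpass_coef v) i 0 = U v k.
Proof.
by move=> k_M; have := lowpass_coef_entry v k; rewrite trsampling_mulmx mxE k_M mul0r addr0.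
Qed.

Lemma sqr_enorm_sampling_lowpass v :
  enorm (Phi *m lowpass_coef v) ^+ 2 = (U *m lowpass_coef v) v 0.
Proof.
rewrite sqr_enorm sum_sqr_col trmx_mul -mulmxA mxE [RHS]mxE; apply: eq_bigr => k _.
rewrite -(reg_gram_bandlimited (lowpass_coef_bandlimited v)) reg_gram_lowpass_coef.
rewrite [_^T 0 k]mxE [lowpass_delta v k 0]mxE; case: ltnP => k_M; first by rewrite mulrC.
by rewrite mulr0 lowpass_coef_bandlimited // mulr0.
Qed.

Local Notation normed_preimages :=
  [set y : 'cV[R]_n | inBM U M y /\ enorm (SW j (BM U M y)) <= 1]%classic.

Lemma normed_preimage_bounded y : normed_preimages y ->
  enorm y <= Num.sqrt (\sum_k \sum_i (invmx G *m Phi^T) k i ^+ 2).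
Proof.
case=> /inBMP[z z_bl ->]; rewrite BM_mulmx // enorm_orthmx // (enorm_SW j_inj).
rewrite -sampling_mulmx // => w_le1.
have -> : z = invmx G *m Phi^T *m (Phi *m z).
  by rewrite -mulmxA -reg_gram_bandlimited // mulKmx // reg_gram_unit.
apply: le_trans (enorm_mulmx_le _ _) _.
by rewrite ler_piMr ?sqrtr_ge0.
Qed.

Lemma zero_normed_preimage : normed_preimages 0.
Proof.
split; first exact: inBM0.
by rewrite BM_id; [rewrite SW0 enorm0 ler01 | exact: inBM0].
Qed.

Lemma inv_opnorm_has_sup : has_sup [set enorm y | y in normed_preimages]%classic.
Proof.
split; first by exists 0, 0; [exact: zero_normed_preimage | exact: enorm0].
exists (Num.sqrt (\sum_k \sum_i (invmx G *m Phi^T) k i ^+ 2)).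
by move=> _ [y /normed_preimage_bounded ? <-].
Qed.

Lemma inv_opnorm_ge0 : 0 <= L.
Proof.
apply: (sup_upper_bound inv_opnorm_has_sup).
by exists 0; [exact: zero_normed_preimage | exact: enorm0].
Qed.

Lemma enorm_le_inv_opnorm y : inBM U M y -> enorm y <= L * enorm (SW j y).
Proof.
move=> y_BM; have [SWy0|SWy_neq0] := eqVneq (enorm (SW j y)) 0.
  suff -> : y = 0 by rewrite enorm0 mulr_ge0 ?inv_opnorm_ge0 ?enorm_ge0.
  apply: W_norming => //; first exact: inBM0.
  by rewrite (BM_id y_BM) (BM_id inBM0) SW0 (enorm_eq0 SWy0).
have SWy_gt0 : 0 < enorm (SW j y) by rewrite lt_def SWy_neq0 enorm_ge0.
rewrite -ler_pdivrMr // mulrC -[(enorm _)^-1]ger0_norm ?invr_ge0 ?enorm_ge0 // -enormZ.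
apply: (sup_upper_bound inv_opnorm_has_sup); exists ((enorm (SW j y))^-1 *: y) => //.
split; first exact: inBMZ.
rewrite BM_id; last exact: inBMZ.
by rewrite SWZ enormZ ger0_norm ?invr_ge0 ?enorm_ge0 // mulVf.
Qed.

Lemma exists_lowpass_reproducing_coef v : exists a : 'cV[R]_N,
  (forall k, (k < M)%N -> \sum_i U (j i) k * a i 0 = U v k) /\ enorm a <= L.
Proof.
have b_bl := lowpass_coef_bandlimited v.
exists (Phi *m lowpass_coef v); split; first exact: lowpass_coef_normal_eq.
set a := Phi *m _; have a_ge0 : 0 <= enorm a := enorm_ge0 a.
have : enorm a ^+ 2 <= L * enorm a.
  rewrite sqr_enorm_sampling_lowpass /a sampling_mulmx // -(enorm_SW j_inj).
  apply: le_trans (ler_norm _) _; apply: le_trans (norm_entry_le_enorm _ v) _.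
  exact: enorm_le_inv_opnorm (inBM_mulmx b_bl).
have [->|a_neq0] := eqVneq (enorm a) 0; first by rewrite inv_opnorm_ge0.
by rewrite expr2 ler_pM2r // lt_def a_neq0 a_ge0.
Qed.

End NormingSet.

Section TailSums.
Variable R : realType.

Lemma sum_le_telescope (h T : nat -> R) m p : (m <= p)%N ->
  (forall k, (m <= k)%N -> h k <= T k - T k.+1) -> 0 <= T p ->
  \sum_(m <= k < p) h k <= T m.
Proof.
move=> m_le_p h_le Tp_ge0.
apply: le_trans (_ : \sum_(m <= k < p) (T k - T k.+1) <= _).
  by apply: ler_sum_nat => k /andP[m_le_k _]; exact: h_le.
have := telescope_sumr (fun k => - T k) m_le_p.
under eq_bigr do rewrite opprK addrC.
by move=> ->; lra.
Qed.

(* x^(1-s) = (x+1)^(1-s) e^((s-1) ln((x+1)/x)), where ln((x+1)/x) >= 1/(x+1)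
   and e^u >= 1 + u. *)
Lemma powR_tail_step (x s : R) : 0 < x -> 1 <= s ->
  (s - 1) * (x + 1) `^ (- s) <= x `^ (- (s - 1)) - (x + 1) `^ (- (s - 1)).
Proof.
move=> x_gt0 s_ge1; have x1_gt0 : 0 < x + 1 by rewrite addr_gt0.
rewrite /powR !gt_eqF //; set lx := ln x; set lx1 := ln (x + 1).
have log_gap : 1 / (x + 1) <= lx1 - lx.
  have := expR_ge1Dx (lx - lx1); rewrite expRB !lnK ?posrE //.
  have -> : x / (x + 1) = 1 - 1 / (x + 1) by field; rewrite gt_eqF.
  lra.
set A := expR (- (s - 1) * lx1); have A_gt0 : 0 < A := expR_gt0 _.
have -> : expR (- s * lx1) = A / (x + 1).
  rewrite /A -[x + 1 in RHS]lnK ?posrE // -expRN -expRD; congr expR; rewrite /lx1; ring.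
have -> : expR (- (s - 1) * lx) = A * expR ((s - 1) * (lx1 - lx)).
  by rewrite /A -expRD; congr expR; ring.
have := expR_ge1Dx ((s - 1) * (lx1 - lx)); set E := expR _ => E_ge.
have s1_ge0 : 0 <= s - 1 by rewrite subr_ge0.
apply: le_trans (_ : A * ((s - 1) * (lx1 - lx)) <= _).
  have -> : (s - 1) * (A / (x + 1)) = A * ((s - 1) * (1 / (x + 1))).
    by field; rewrite gt_eqF.
  by rewrite ler_wpM2l ?(ltW A_gt0) // ler_wpM2l.
have : A * (1 + (s - 1) * (lx1 - lx)) <= A * E by rewrite ler_wpM2l ?(ltW A_gt0).
lra.
Qed.

Lemma tail_sum_pow_le n M (F : 'I_n -> R) (C s : R) :
  (0 < M)%N -> (M <= n)%N -> 0 <= C -> 1 < s ->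
  (forall k : 'I_n, F k <= C * (k.+1)%:R `^ (- s)) ->
  \sum_(k < n | (M <= k)%N) F k <= C / (s - 1) * M%:R `^ (- (s - 1)).
Proof.
move=> M_gt0 M_le_n C_ge0 s_gt1 F_le.
have s1_gt0 : 0 < s - 1 by rewrite subr_gt0.
apply: le_trans (_ : \sum_(k < n | (M <= k)%N) C * (k.+1)%:R `^ (- s) <= _).
  by apply: ler_sum => k _; exact: F_le.
have -> : \sum_(k < n | (M <= k)%N) C * (k.+1)%:R `^ (- s) =
    \sum_(M <= k < n) C * (k.+1)%:R `^ (- s) by rewrite big_geq_mkord.
apply: (sum_le_telescope (T := fun k => C / (s - 1) * k%:R `^ (- (s - 1)))) => //.
  move=> k M_le_k /=; rewrite -mulrBr.
  have k_gt0 : 0 < k%:R :> R by rewrite ltr0n (leq_trans M_gt0).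
  have := powR_tail_step k_gt0 (ltW s_gt1); rewrite natr1 => step.
  have -> : C * (k.+1)%:R `^ (- s) = C / (s - 1) * ((s - 1) * (k.+1)%:R `^ (- s)).
    by field; rewrite gt_eqF.
  by rewrite ler_wpM2l // divr_ge0 // ltW.
by rewrite mulr_ge0 ?powR_ge0 // divr_ge0 // ltW.
Qed.

Lemma tail_sum_exp_le n M (F : 'I_n -> R) (C t : R) :
  (M <= n)%N -> 0 <= C -> 0 < t ->
  (forall k : 'I_n, F k <= C * expR (- (t * (k.+1)%:R))) ->
  \sum_(k < n | (M <= k)%N) F k <= C / (1 - expR (- t)) * expR (- (t * (M.+1)%:R)).
Proof.
move=> M_le_n C_ge0 t_gt0 F_le.
have q_gt0 : 0 < 1 - expR (- t) by rewrite subr_gt0 expR_lt1 oppr_lt0.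
apply: le_trans (_ : \sum_(k < n | (M <= k)%N) C * expR (- (t * (k.+1)%:R)) <= _).
  by apply: ler_sum => k _; exact: F_le.
have -> : \sum_(k < n | (M <= k)%N) C * expR (- (t * (k.+1)%:R)) =
    \sum_(M <= k < n) C * expR (- (t * (k.+1)%:R)) by rewrite big_geq_mkord.
apply: (sum_le_telescope (T := fun k => C / (1 - expR (- t)) * expR (- (t * (k.+1)%:R)))) => //.
  move=> k _ /=; rewrite -[(k.+2)%:R]natr1.
  have -> : expR (- (t * ((k.+1)%:R + 1))) = expR (- (t * (k.+1)%:R)) * expR (- t).
    by rewrite -expRD; congr expR; ring.
  set e := expR (- (t * _)).
  have -> : C / (1 - expR (- t)) * e - C / (1 - expR (- t)) * (e * expR (- t)) = C * e.
    by field; rewrite gt_eqF.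
  exact: lexx.
by rewrite mulr_ge0 ?expR_ge0 // divr_ge0 // ltW.
Qed.

End TailSums.

Section InterpolationError.
Variables (R : realType) (n : nat) (U : 'M[R]_n) (f : 'cV[R]_n).
Variables (N : nat) (j : 'I_N -> 'I_n) (M : nat).
Hypotheses (U_orth : U^T *m U = 1%:M) (f_pd : pos_def_fun U f).
Hypotheses (j_inj : injective j) (W_norming : norming U M j).

Local Notation L := (inv_opnorm U M j).
Local Notation tail := (\sum_(k < n | (M <= k)%N) gft U f k 0).

Lemma orthmx_col_sumsq k : \sum_i U i k ^+ 2 = 1.
Proof.
transitivity ((U^T *m U) k k); last by rewrite U_orth mxE eqxx.
by rewrite mxE; apply: eq_bigr => i _; rewrite mxE expr2.
Qed.

Lemma gft_residual v (a : 'cV[R]_N) k :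
  (U^T *m (ebasis R v - sel_mx R j *m a)) k 0 = U v k - \sum_i U (j i) k * a i 0.
Proof.
rewrite mulmxBr mxE [X in _ + X]mxE; congr (_ - _); first by rewrite mulmx_ebasis !mxE.
by rewrite mulmxA mxE; apply: eq_bigr => i _; rewrite mulmx_sel mxE.
Qed.

Lemma norm_gft_residual_le v (a : 'cV[R]_N) k :
  `|(U^T *m (ebasis R v - sel_mx R j *m a)) k 0| <= 1 + enorm a.
Proof.
rewrite gft_residual; apply: le_trans (ler_normB _ _) _; apply: lerD.
  apply: norm_le_of_sqr_le => //; rewrite expr1n -(orthmx_col_sumsq k).
  exact: (sqr_le_sum (fun i => U i k)).
apply: norm_le_of_sqr_le; first exact: enorm_ge0.
apply: le_trans (sum_mul_sqr_le (fun i => U (j i) k) (fun i => a i 0)) _.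
rewrite sqr_enorm; apply: ler_piMl; first by rewrite sumr_ge0 // => i _; rewrite sqr_ge0.
rewrite -(orthmx_col_sumsq k).
by apply: (sum_over_nodes_le j_inj (F := fun i => U i k ^+ 2)) => i; rewrite sqr_ge0.
Qed.

Lemma interp_err_le_tail x v :
  `|(x - interp U f j x) v 0| <= (1 + L) * Num.sqrt tail * Kfnorm U f x.
Proof.
have [a [a_rep a_le]] := exists_lowpass_reproducing_coef U_orth j_inj W_norming v.
have fh_ge0 k : 0 <= gft U f k 0 by exact: gft_ge0.
have tail_ge0 : 0 <= tail by rewrite sumr_ge0.
have L1_ge0 : 0 <= 1 + L by rewrite addr_ge0 ?inv_opnorm_ge0.
set g := ebasis R v - sel_mx R j *m a.
have res_le : \sum_k (U^T *m g) k 0 ^+ 2 * gft U f k 0 <= ((1 + L) * Num.sqrt tail) ^+ 2.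
  rewrite exprMn sqr_sqrtr // mulr_sumr (bigID (fun k : 'I_n => (k < M)%N)) /=.
  rewrite big1 ?add0r => [|k k_M]; last by rewrite gft_residual a_rep // subrr expr0n mul0r.
  rewrite (eq_bigl (fun k : 'I_n => (M <= k)%N)) => [|k]; last by rewrite -leqNgt.
  apply: ler_sum => k _; rewrite ler_wpM2r //.
  apply: sqr_le_of_norm_le; apply: le_trans (norm_gft_residual_le v a k) _.
  by rewrite lerD2l.
apply: norm_le_of_sqr_le; first by rewrite !mulr_ge0 ?sqrtr_ge0.
rewrite exprMn; apply: le_trans (interp_err_sqr_le f_pd j_inj x v a) _.
by rewrite ler_wpM2r ?sqr_ge0.
Qed.

Lemma maxabs_interp_err_le x (c p : R) : 0 <= c -> 0 <= p -> tail <= c * p ^+ 2 ->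
  maxabs (x - interp U f j x) <= Num.sqrt c * (1 + L) * p * Kfnorm U f x.
Proof.
move=> c_ge0 p_ge0 tail_le; have L1_ge0 : 0 <= 1 + L by rewrite addr_ge0 ?inv_opnorm_ge0.
apply: bigmax_le => [|v _]; first by rewrite !mulr_ge0 ?sqrtr_ge0.
apply: le_trans (interp_err_le_tail x v) _.
have -> : Num.sqrt c * (1 + L) * p * Kfnorm U f x = (1 + L) * (Num.sqrt c * p) * Kfnorm U f x.
  by ring.
rewrite ler_wpM2r ?sqrtr_ge0 // ler_wpM2l //.
by rewrite -(ger0_norm p_ge0) -sqrtr_sqr -sqrtrM // ler_sqrt // mulr_ge0 ?sqr_ge0.
Qed.

End InterpolationError.

Theorem corollary2 (R : realType) (n : nat)
  (A : 'M[R]_n) (U : 'M[R]_n) (lam : 'rV[R]_n)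
  (hAsym : A^T = A) (hAnn : forall i k, 0 <= A i k)
  (hdeg : forall i, 0 < degree A i)
  (hUorth : U^T *m U = 1%:M)
  (hEig : normLap A = U *m diag_mx lam *m U^T)
  (f : 'cV[R]_n) (hf : pos_def_fun U f)
  (N : nat) (j : 'I_N -> 'I_n) (hj : injective j)
  (M : nat) (hM0 : (0 < M)%N) (hMn : (M <= n)%N)
  (hW : norming U M j)
  (x : 'cV[R]_n) :
  (forall C1 s : R, 0 < C1 -> 1 < s ->
     (forall k : 'I_n, gft U f k 0 <= C1 * (k.+1)%:R `^ (- s)) ->
     maxabs (x - interp U f j x) <=
       Num.sqrt (C1 / (s - 1)) * (1 + inv_opnorm U M j)
       * M%:R `^ (- ((s - 1) / 2)) * Kfnorm U f x) /\
  (forall C2 t : R, 0 < C2 -> 0 < t ->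
     (forall k : 'I_n, gft U f k 0 <= C2 * expR (- (t * (k.+1)%:R))) ->
     maxabs (x - interp U f j x) <=
       Num.sqrt (C2 / (1 - expR (- t))) * (1 + inv_opnorm U M j)
       * expR (- (t / 2 * (M.+1)%:R)) * Kfnorm U f x).
Proof.
split=> [C1 s C1_gt0 s_gt1 fh_le | C2 t C2_gt0 t_gt0 fh_le].
  have s1_gt0 : 0 < s - 1 by rewrite subr_gt0.
  apply: maxabs_interp_err_le => //; [by rewrite divr_ge0 ?ltW | exact: powR_ge0 |].
  apply: le_trans (tail_sum_pow_le hM0 hMn (ltW C1_gt0) s_gt1 fh_le) _.
  rewrite -powR_mulrn ?powR_ge0 // -powRrM.
  by have -> : - ((s - 1) / 2) * 2%:R = - (s - 1) by field.
have q_gt0 : 0 < 1 - expR (- t) by rewrite subr_gt0 expR_lt1 oppr_lt0.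
apply: maxabs_interp_err_le => //; [by rewrite divr_ge0 ?ltW | exact: expR_ge0 |].
apply: le_trans (tail_sum_exp_le hMn (ltW C2_gt0) t_gt0 fh_le) _.
by rewrite -expRM_natl; have -> : 2%:R * - (t / 2 * M.+1%:R) = - (t * M.+1%:R) by field.
Qed.
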